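(* For all $n\ge1$, $a_{\{0112,0120\}}(n)=2^{n-1}+\binom{n+1}{4}$.
   Context: An ascent in an integer sequence $s_1\cdots s_m$ is an index $j$ with $s_j<s_{j+1}$; $\mathrm{asc}$ denotes the number of ascents. An ascent sequence is a sequence $x_1\cdots x_n$ of nonnegative integers with $x_1=0$ and $x_i\le 1+\mathrm{asc}(x_1\cdots x_{i-1})$ for all $i\ge2$. The reduction $\mathrm{red}(w)$ of an integer sequence $w$ replaces the $i$-th smallest distinct letter of $w$ by $i-1$; a pattern is a reduced sequence. A sequence $x$ contains a pattern $p=p_1\cdots p_k$ if there are indices $i_1<\cdots<i_k$ with $\mathrm{red}(x_{i_1}\cdots x_{i_k})=p$; otherwise $x$ avoids $p$. For a finite set $P$ of patterns, $a_P(n)$ denotes the number of ascent sequences of length $n$ avoiding every pattern in $P$. *)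

From mathcomp Require Import all_boot.
Set Implicit Arguments. Unset Strict Implicit. Unset Printing Implicit Defensive.

Definition asc (s : seq nat) : nat :=
  count (fun j => nth 0 s j < nth 0 s j.+1) (iota 0 (size s).-1).

Definition is_ascent_seq (x : seq nat) : bool :=
  (nth 0 x 0 == 0) &&
  all (fun i => nth 0 x i <= (asc (take i x)).+1) (iota 1 (size x).-1).

Definition red (w : seq nat) : seq nat :=
  map (fun a => index a (sort leq (undup w))) w.

Definition contains (x p : seq nat) : bool :=
  [exists m : (size x).-tuple bool, red (mask m x) == p].

Definition avoids (x p : seq nat) : bool := ~~ contains x p.

Definition avoiding_ascent_seq (P : seq (seq nat)) (n : nat) (x : seq nat) : bool :=
  [&& size x == n, is_ascent_seq x & all (avoids x) P].

(* a_P(n): the number of such sequences. Every entry of an ascent sequence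
   of length n is < n (since asc < n), so the set is enumerated exactly
   by the n-tuples over 'I_n. *)
Definition a_P (P : seq (seq nat)) (n : nat) : nat :=
  #|[set t : n.-tuple 'I_n |
      avoiding_ascent_seq P n (map (@nat_of_ord n) (val t)) ]|.

Example ex_red : red [:: 5; 2; 7; 2] = [:: 1; 0; 2; 0]. Proof. by vm_compute. Qed.
Example ex_asc1 : is_ascent_seq [:: 0; 1; 0; 2; 3; 1] = true. Proof. by vm_compute. Qed.
Example ex_asc2 : is_ascent_seq [:: 0; 2] = false. Proof. by vm_compute. Qed.

From mathcomp Require Import all_boot zify.
Set Implicit Arguments. Unset Strict Implicit. Unset Printing Implicit Defensive.

(* The avoiders of length n are the sequences 0 w with w a 0/1-word, and the
   sequences 0^(a+1) 1 0^b 2 3 ... (c+2) (c+2)^j (c+1)^l with a+b+c+j+l = n-3;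
   there are 2^(n-1) of the former and C(n+1,4) of the latter (compositions of
   n-3 into five parts).  In a
   0/1-word a letter v >= 2 needs an ascent, i.e. a 1; a second 1 would give
   0112 with v, so there is exactly one ascent and v = 2.  Once the maximum
   K = c+2 has appeared, the next letter is at most K+1; a letter v < K-1
   completes an occurrence v (v+1) (v+2) v of 0120, while a letter exceeding a
   repeated last letter completes 0112 together with the initial 0. *)

Lemma red_index s u : sorted ltn u -> s =i u -> red s = map (index^~ u) s.
Proof.
move=> u_sorted su; rewrite /red; suff -> : sort leq (undup s) = u by [].
apply: (sorted_eq leq_trans anti_leq).
- exact: (sort_sorted leq_total).
- by move: u_sorted; rewrite ltn_sorted_uniq_leq => /andP[].
rewrite perm_sort uniq_perm ?undup_uniq ?(sorted_uniq ltn_trans ltnn) // => z.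
by rewrite mem_undup su.
Qed.

Section ReductionOrder.

Variables (s : seq nat) (i j : nat).
Hypotheses (lt_i_s : i < size s) (lt_j_s : j < size s).

Let u := sort leq (undup s).

Let u_sorted : sorted ltn u.
Proof. by rewrite ltn_sorted_uniq_leq sort_uniq undup_uniq (sort_sorted leq_total). Qed.

Let mem_u k : k < size s -> nth 0 s k \in u.
Proof. by move=> lt_k_s; rewrite mem_sort mem_undup mem_nth. Qed.

Let nth_red k : k < size s -> nth 0 (red s) k = index (nth 0 s k) u.
Proof. by move=> lt_k_s; rewrite (nth_map 0). Qed.

Lemma red_ltn : nth 0 (red s) i < nth 0 (red s) j -> nth 0 s i < nth 0 s j.
Proof. by rewrite !nth_red //; apply: (sorted_ltn_index ltn_trans u_sorted); rewrite ?mem_u. Qed.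

Lemma red_inj : nth 0 (red s) i = nth 0 (red s) j -> nth 0 s i = nth 0 s j.
Proof. by rewrite !nth_red //; apply: index_inj; rewrite ?mem_u. Qed.

End ReductionOrder.

Definition pat0112 (a b c d : nat) := [&& a < b, b == c & c < d].
Definition pat0120 (a b c d : nat) := [&& a < b, b < c & d == a].

Lemma red_0112 a b c d : (red [:: a; b; c; d] == [:: 0; 1; 1; 2]) = pat0112 a b c d.
Proof.
apply/eqP/and3P => [red_abcd | [lt_ab /eqP <- lt_bd]].
  have ord := @red_ltn [:: a; b; c; d].
  have eq := @red_inj [:: a; b; c; d].
  rewrite red_abcd in ord eq.
  by split; [exact: (ord 0 1 isT isT isT) | apply/eqP; exact: (eq 1 2 isT isT erefl)
            | exact: (ord 2 3 isT isT isT)].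
rewrite (@red_index _ [:: a; b; d]) /=; last first.
- by move=> z; rewrite !inE; case: (z == b).
- by rewrite lt_ab lt_bd.
by rewrite !eqxx (ltn_eqF lt_ab) (ltn_eqF lt_bd) (ltn_eqF (ltn_trans lt_ab lt_bd)).
Qed.

Lemma red_0120 a b c d : (red [:: a; b; c; d] == [:: 0; 1; 2; 0]) = pat0120 a b c d.
Proof.
apply/eqP/and3P => [red_abcd | [lt_ab lt_bc /eqP ->]].
  have ord := @red_ltn [:: a; b; c; d].
  have eq := @red_inj [:: a; b; c; d].
  rewrite red_abcd in ord eq.
  by split; [exact: (ord 0 1 isT isT isT) | exact: (ord 1 2 isT isT isT)
            | apply/eqP; exact: (eq 3 0 isT isT erefl)].
rewrite (@red_index _ [:: a; b; c]) /=; last first.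
- by move=> z; rewrite !inE; case: (z == a); rewrite ?orbT ?orbF.
- by rewrite lt_ab lt_bc.
by rewrite !eqxx (ltn_eqF lt_ab) (ltn_eqF lt_bc) (ltn_eqF (ltn_trans lt_ab lt_bc)).
Qed.

Definition has_subseq4 (P : nat -> nat -> nat -> nat -> bool) (x : seq nat) :=
  exists i j k l, [/\ i < j, j < k, k < l, l < size x &
    P (nth 0 x i) (nth 0 x j) (nth 0 x k) (nth 0 x l)].

Lemma mask_nth_iota (m : bitseq) (x : seq nat) :
  mask m x = map (nth 0 x) (mask m (iota 0 (size x))).
Proof. by rewrite map_mask -/(mkseq _ _) mkseq_nth. Qed.

Lemma contains4P x p (P : nat -> nat -> nat -> nat -> bool) : size p = 4 ->
  (forall a b c d, (red [:: a; b; c; d] == p) = P a b c d) ->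
  reflect (has_subseq4 P x) (contains x p).
Proof.
move=> size_p redP.
apply: (iffP existsP) => [[m /eqP red_m] | [i [j [k [l [ij jk kl lx Pijkl]]]]]].
  have idx_sorted : sorted ltn (mask m (iota 0 (size x))).
    exact: (sorted_mask ltn_trans _ (iota_ltn_sorted 0 _)).
  have idx_lt t : t \in mask m (iota 0 (size x)) -> t < size x.
    by move/mem_mask; rewrite mem_iota.
  move: red_m idx_sorted idx_lt; rewrite mask_nth_iota.
  case: (mask m _) => [|i [|j [|k [|l [|? ?]]]]] red_m;
    try by move: (congr1 size red_m); rewrite size_map size_map size_p.
  move=> /= /and4P[ij jk kl _] idx_lt; exists i, j, k, l; split => //.
    by apply: idx_lt; rewrite !inE eqxx !orbT.
  by rewrite -redP red_m.
pose I := [:: i; j; k; l].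
have size_m : size [seq t \in I | t <- iota 0 (size x)] == size x.
  by rewrite size_map size_iota.
exists (Tuple size_m); rewrite /= mask_nth_iota -filter_mask.
have -> : [seq t <- iota 0 (size x) | t \in I] = I.
  apply: (irr_sorted_eq ltn_trans ltnn).
  - exact: (sorted_filter ltn_trans _ (iota_ltn_sorted 0 _)).
  - by rewrite /= ij jk kl.
  move=> t; rewrite mem_filter mem_iota andbC; apply/andP/idP => [[] // | tI].
  by split=> //; move: tI; rewrite !inE => /or4P[] /eqP ->; lia.
by rewrite redP.
Qed.

Lemma contains_0112P x : reflect (has_subseq4 pat0112 x) (contains x [:: 0; 1; 1; 2]).
Proof. exact: contains4P red_0112. Qed.

Lemma contains_0120P x : reflect (has_subseq4 pat0120 x) (contains x [:: 0; 1; 2; 0]).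
Proof. exact: contains4P red_0120. Qed.

Lemma avoiding_ascent_seqE n x :
  avoiding_ascent_seq [:: [:: 0; 1; 1; 2]; [:: 0; 1; 2; 0]] n x <->
  [/\ size x = n, is_ascent_seq x, ~ has_subseq4 pat0112 x & ~ has_subseq4 pat0120 x].
Proof.
rewrite /avoiding_ascent_seq /avoids /= andbT.
split=> [/and4P[/eqP size_x asc_x /contains_0112P no0112 /contains_0120P no0120] //|].
case=> <- -> no0112 no0120; rewrite eqxx /=.
by apply/andP; split; apply/negP; [move/contains_0112P | move/contains_0120P].
Qed.

Lemma has_subseq4_rcons P x v : has_subseq4 P x -> has_subseq4 P (rcons x v).
Proof.
case=> i [j [k [l [ij jk kl lx Px]]]]; exists i, j, k, l.
have [jx ix] : j < size x /\ i < size x by lia.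
by rewrite size_rcons !nth_rcons ix jx (ltn_trans kl lx) lx; split=> //; apply: ltnW.
Qed.

Lemma has_subseq4_mkseq P f n : has_subseq4 P (mkseq f n) ->
  exists i j k l, [/\ i < j, j < k, k < l & P (f i) (f j) (f k) (f l)].
Proof.
case=> i [j [k [l [ij jk kl]]]]; rewrite size_mkseq => ln.
have [i_n j_n k_n] : [/\ i < n, j < n & k < n] by split; lia.
by rewrite !nth_mkseq // => Pf; exists i, j, k, l.
Qed.

Lemma is_ascent_seq_rcons x v : x != [::] ->
  is_ascent_seq (rcons x v) = is_ascent_seq x && (v <= (asc x).+1).
Proof.
rewrite -size_eq0 -lt0n => x_gt0; have x_pred : (size x).-1 + 1 = size x by rewrite addn1 prednK.
rewrite /is_ascent_seq size_rcons nth_rcons x_gt0 -andbA [(size x).+1.-1]/=.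
congr (_ && _); rewrite -[in iota 1 (size x)]x_pred iotaD all_cat /= andbT ?add1n (prednK x_gt0).
rewrite -cats1 take_size_cat // nth_cat ltnn subnn /=; congr (_ && _).
apply: eq_in_all => i; rewrite mem_iota add1n (prednK x_gt0) => /andP[_ lt_i].
by rewrite takel_cat ?nth_cat ?lt_i //; apply: ltnW.
Qed.

Lemma ascent_seq_lt x : is_ascent_seq x -> all (fun y => y < size x) x.
Proof.
case/andP => /eqP x_0 /allP x_asc; apply/(all_nthP 0) => i.
have [-> | i_gt0 lt_i] := posnP i; first by rewrite x_0.
have asc_take : asc (take i x) <= i.-1.
  by rewrite /asc size_take lt_i; apply: leq_trans (count_size _ _) _; rewrite size_iota.
have := x_asc i; rewrite mem_iota; lia.
Qed.

Lemma asc_mkseq f n : asc (mkseq f n) = count (fun i => f i < f i.+1) (iota 0 n.-1).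
Proof.
rewrite /asc size_mkseq; apply: eq_in_count => i; rewrite mem_iota => /andP[_ lt_i].
by rewrite !nth_mkseq //; lia.
Qed.

(* [fam a b c j] is the infinite word 0^(a+1) 1 0^b 2 3 ... (c+2) (c+2)^j (c+1)(c+1)...;
   its prefixes of length at least a+b+c+j+3 are the avoiders of the second kind. *)
Definition fam (a b c j i : nat) : nat :=
  if i <= a then 0 else if i == a.+1 then 1 else if i <= a + b + 1 then 0
  else if i <= a + b + c + 2 then i - (a + b) else if i <= a + b + c + j + 2 then c.+2
  else c.+1.

Lemma asc_fam a b c j n :
  asc (mkseq (fam a b c j) n) = (a.+1 < n) + (minn n (a + b + c + 3) - (a + b + 2)).
Proof.
rewrite asc_mkseq; elim: n => [|[|n] IH]; try by rewrite /=; lia.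
rewrite [n.+2.-1]/= -addn1 iotaD count_cat IH /= addn0 /fam.
by repeat case: ifP => ?; lia.
Qed.

Lemma fam_ascent a b c j n : is_ascent_seq (mkseq (fam a b c j) n).
Proof.
elim: n => [|[|n] IH] //; rewrite mkseqS is_ascent_seq_rcons -?size_eq0 ?size_mkseq //.
by rewrite IH asc_fam /fam; repeat case: ifP => ?; lia.
Qed.

Lemma fam_avoid0112 a b c j n : ~ has_subseq4 pat0112 (mkseq (fam a b c j) n).
Proof.
case/has_subseq4_mkseq=> i1 [i2 [i3 [i4 [lt12 lt23 lt34 /and3P[]]]]].
by rewrite /fam => + /eqP; repeat (case: ifP => ?; try lia).
Qed.

Lemma fam_avoid0120 a b c j n : ~ has_subseq4 pat0120 (mkseq (fam a b c j) n).
Proof.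
case/has_subseq4_mkseq=> i1 [i2 [i3 [i4 [lt12 lt23 lt34 /and3P[]]]]].
by rewrite /fam => + + /eqP; repeat (case: ifP => ?; try lia).
Qed.

Lemma fam_inj n a b c j a' b' c' j' :
  a + b + c + j + 3 <= n -> a' + b' + c' + j' + 3 <= n ->
  mkseq (fam a b c j) n = mkseq (fam a' b' c' j') n -> [/\ a = a', b = b', c = c' & j = j'].
Proof.
move=> len len' eq_x.
(* Compare the words where the 1, the 2, the letter after the run and the tail begin. *)
have eq_at i : i < n -> fam a b c j i = fam a' b' c' j' i.
  by move=> lt_i; rewrite -(nth_mkseq 0 _ lt_i) eq_x nth_mkseq.
have ea : a = a'.
  by move: (eq_at a.+1) (eq_at a'.+1); rewrite /fam; repeat (case: ifP => ?; try lia).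
subst a'; have eb : b = b'.
  by move: (eq_at (a + b + 2)) (eq_at (a + b' + 2)); rewrite /fam; repeat (case: ifP => ?; try lia).
subst b'; have ec : c = c'.
  move: (eq_at (a + b + c + 3)) (eq_at (a + b + c' + 3)); rewrite /fam.
  by repeat (case: ifP => ?; try lia).
subst c'; split=> //; move: (eq_at (a + b + c + j + 3)) (eq_at (a + b + c + j' + 3)).
by rewrite /fam; repeat (case: ifP => ?; try lia).
Qed.

Lemma rcons_mkseq (T : Type) (f g : nat -> T) n (v : T) :
  (forall i, i < n -> f i = g i) -> g n = v -> rcons (mkseq f n) v = mkseq g n.+1.
Proof.
move=> eq_fg <-; rewrite mkseqS; congr rcons.
by apply/eq_in_map => i; rewrite mem_iota => /andP[_]; apply: eq_fg.
Qed.

Definition fam_prefix n (x : seq nat) :=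
  exists a b c j, a + b + c + j + 3 <= n /\ x = mkseq (fam a b c j) n.

Section Extension.

Variables (x : seq nat) (v : nat).
Hypotheses (x_nil : x != [::]) (asc_xv : is_ascent_seq (rcons x v))
  (no0112 : ~ has_subseq4 pat0112 (rcons x v)) (no0120 : ~ has_subseq4 pat0120 (rcons x v)).

Let v_le_asc : v <= (asc x).+1.
Proof. by move: asc_xv; rewrite is_ascent_seq_rcons // => /andP[]. Qed.

Let no_pattern_at_end P i j k : ~ has_subseq4 P (rcons x v) ->
  i < j -> j < k -> k < size x -> ~~ P (nth 0 x i) (nth 0 x j) (nth 0 x k) v.
Proof.
move=> noP ij jk kn; apply/negP => Pv; apply: noP; exists i, j, k, (size x).
have [i_n j_n] : i < size x /\ j < size x by split; lia.
by rewrite size_rcons !nth_rcons i_n j_n kn ltnn eqxx.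
Qed.

Lemma binary_rcons : nth 0 x 0 = 0 -> all (fun y => y <= 1) x ->
  v <= 1 \/ fam_prefix (size x).+1 (rcons x v).
Proof.
move=> x_0 /all_nthP x_bin; case: (leqP v 1) => [|v_gt1]; [by left | right].
have q_gt0 : 0 < index 1 x by case: (x) x_nil x_0 => //= y s _ ->.
have x_q : index 1 x < size x -> nth 0 x (index 1 x) = 1 by rewrite index_mem; apply: nth_index.
have x_before_q t : t < index 1 x -> nth 0 x t != 1 by move/(before_find 0)/negbT.
move: (index 1 x) q_gt0 x_q x_before_q => q q_gt0 x_q x_before_q.
have x_zero t : t < size x -> t != q -> nth 0 x t = 0.
  move=> t_n; case: ltngtP => // [t_q | q_t] _.
    by have := x_bin 0 t t_n; have := x_before_q t t_q; lia.
  apply/eqP; apply: contraNT (no_pattern_at_end no0112 q_gt0 q_t t_n).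
  by have := x_bin 0 t t_n; rewrite /pat0112 x_0 x_q; lia.
have x_eq : x = mkseq (fam q.-1 (size x - q.+1) 0 0) (size x).
  apply: (@eq_from_nth _ 0); rewrite ?size_mkseq // => t t_n; rewrite nth_mkseq //.
  have [t_q | t_q] := eqVneq t q; last by rewrite x_zero // /fam; repeat case: ifP; lia.
  by rewrite t_q x_q -?t_q // /fam; repeat case: ifP; lia.
have [q_n v_2] : q < size x /\ v = 2.
  by move: v_le_asc; rewrite {1}x_eq asc_fam; lia.
exists q.-1, (size x - q.+1), 0, 0; split; first lia.
by rewrite {1}x_eq; apply: rcons_mkseq => //; rewrite /fam; repeat case: ifP; lia.
Qed.

Lemma fam_rcons : fam_prefix (size x) x -> fam_prefix (size x).+1 (rcons x v).
Proof.
case=> a [b [c [j [len x_eq]]]].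
have x_nth i : i < size x -> nth 0 x i = fam a b c j i by move=> lt_i; rewrite {1}x_eq nth_mkseq.
have v_le : v <= c.+3 by move: v_le_asc; rewrite {1}x_eq asc_fam; lia.
(* [e w] is the first position holding the letter [w], for [w <= c + 2]. *)
pose e w := if w == 0 then a else if w == 1 then a.+1 else a + b + w.
have fam_e w : w <= c.+2 -> fam a b c j (e w) = w by rewrite /e /fam; repeat case: ifP; lia.
have e_lt w w' : w < w' -> e w < e w' by rewrite /e; repeat case: ifP; lia.
have e_le w : w <= c.+2 -> e w <= a + b + c + 2 by rewrite /e; repeat case: ifP; lia.
have e_n w : w <= c.+2 -> e w < size x by move/e_le; lia.
have v_gt : c < v.
  rewrite ltnNge; apply/negP => v_le_c.
  have e_v2 := e_n v.+2 v_le_c.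
  case/negP: (no_pattern_at_end no0120 (e_lt _ _ (ltnSn v)) (e_lt _ _ (ltnSn v.+1)) e_v2).
  have [le_v1 le_v] : v.+1 <= c.+2 /\ v <= c.+2 by lia.
  by rewrite !x_nth ?e_n ?fam_e // /pat0120 !ltnSn eqxx.
have v_le_last : a + b + c + 3 < size x -> v <= fam a b c j (size x).-1.
  move=> long; set w := fam a b c j (size x).-1; rewrite leqNgt; apply/negP => w_v.
  have [w_gt0 w_le] : 0 < w /\ w <= c.+2 by rewrite /w /fam; repeat case: ifP; lia.
  have [e_w last_n] : e w < (size x).-1 /\ (size x).-1 < size x by have := e_le w w_le; lia.
  case/negP: (no_pattern_at_end no0112 (e_lt 0 w w_gt0) e_w last_n).
  by rewrite !x_nth ?e_n ?fam_e // -/w; apply/and3P.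
exists a, b; case: (ltnP c.+1 v) => [c1_v | v_c1]; last first.
  exists c, j; split; first lia.
  by rewrite {1}x_eq; apply: rcons_mkseq => //; rewrite /fam; repeat case: ifP; lia.
rewrite /fam in v_le_last; case: (ltnP c.+2 v) => [c2_v | v_c2].
  have size_x : size x = a + b + c + 3 by move: v_le_last; repeat case: ifP; lia.
  exists c.+1, 0; split; first lia.
  by rewrite {1}x_eq; apply: rcons_mkseq => [i lt_i|]; rewrite /fam; repeat case: ifP; lia.
have size_x : size x = a + b + c + j + 3 by move: v_le_last; repeat case: ifP; lia.
exists c, j.+1; split; first lia.
by rewrite {1}x_eq; apply: rcons_mkseq => [i lt_i|]; rewrite /fam; repeat case: ifP; lia.
Qed.

End Extension.

Lemma avoider_shape x : x != [::] -> is_ascent_seq x ->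
  ~ has_subseq4 pat0112 x -> ~ has_subseq4 pat0120 x ->
  all (fun y => y <= 1) x \/ fam_prefix (size x) x.
Proof.
elim/last_ind: x => [//|x v IH] _ asc_xv no0112 no0120.
have [x_nil | x_nil] := eqVneq x [::].
  by left; move: asc_xv; rewrite x_nil /is_ascent_seq /= => /andP[/eqP-> _].
have asc_x : is_ascent_seq x by move: asc_xv; rewrite is_ascent_seq_rcons // => /andP[].
have no_prefix P : ~ has_subseq4 P (rcons x v) -> ~ has_subseq4 P x.
  by move=> noP /(has_subseq4_rcons v).
rewrite size_rcons.
case: (IH x_nil asc_x (no_prefix _ no0112) (no_prefix _ no0120)) => [x_bin | x_fam].
  have x_0 : nth 0 x 0 = 0 by case/andP: asc_x => /eqP.
  have [v_le1 | xv_fam] := binary_rcons x_nil asc_xv no0112 x_0 x_bin; last by right.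
  by left; rewrite all_rcons v_le1.
by right; apply: fam_rcons.
Qed.

Lemma card_tuples_seq n (Q : pred (seq nat)) (L : seq (seq nat)) :
  uniq L -> (forall x, Q x = (x \in L)) ->
  (forall x, Q x -> size x = n /\ all (fun y => y < n) x) ->
  #|[set t : n.-tuple 'I_n | Q (map val t)]| = size L.
Proof.
move=> L_uniq QL Q_bound; pose vals (t : n.-tuple 'I_n) := map val t.
have vals_inj : injective vals by move=> t1 t2 /(inj_map val_inj)/val_inj.
rewrite -(size_image vals); apply/perm_size/uniq_perm => //.
  by rewrite map_inj_uniq ?enum_uniq.
move=> x; rewrite -QL; apply/imageP/idP => [[t] | Qx]; first by rewrite inE => Qt ->.
have [size_x x_lt] := Q_bound x Qx.
have vals_x : map val (pmap insub x : seq 'I_n) = x.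
  by rewrite (pmap_filter (insubK _)); apply/all_filterP; rewrite (eq_all (isSome_insub _)).
have size_t : size (pmap insub x : seq 'I_n) == n by rewrite -(size_map val) vals_x size_x.
by exists (Tuple size_t); rewrite ?inE /vals /= vals_x.
Qed.

Lemma nth_le1 x i : all (fun y => y <= 1) x -> nth 0 x i <= 1.
Proof. by move/all_nthP=> x_bin; case: (ltnP i (size x)) => [/x_bin | /(nth_default 0) ->]. Qed.

Definition binary_seq k (t : k.-tuple bool) : seq nat := 0 :: map nat_of_bool t.

Lemma mem_binary_seqs k x : (x \in image (@binary_seq k) {: k.-tuple bool}) =
  [&& size x == k.+1, nth 0 x 0 == 0 & all (fun y => y <= 1) x].
Proof.
apply/imageP/and3P => [[t _ ->] | [size_x /eqP x_0 x_bin]].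
  by rewrite /= size_map size_tuple; split=> //; apply/allP => _ /mapP[[] _ ->].
case: x size_x x_0 x_bin => // y s /= size_s -> /andP[_ /allP s_bin].
have size_t : size (map (eq_op^~ 1) s) == k by rewrite size_map.
exists (Tuple size_t) => //; rewrite /binary_seq /= -map_comp; congr cons.
by rewrite -[LHS]map_id; apply/eq_in_map => z /s_bin; case: z => [|[|]].
Qed.

Lemma binary_ascent x : nth 0 x 0 = 0 -> all (fun y => y <= 1) x -> is_ascent_seq x.
Proof.
rewrite /is_ascent_seq => -> x_bin /=; apply/allP => i _.
by have := nth_le1 i x_bin; lia.
Qed.

Lemma binary_avoid x : all (fun y => y <= 1) x ->
  ~ has_subseq4 pat0112 x /\ ~ has_subseq4 pat0120 x.
Proof.
move=> x_bin; have le1 := nth_le1 _ x_bin.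
split=> -[i [j [k [l [_ _ _ _]]]]] /and3P[] /=;
  by have := le1 j; have := le1 k; have := le1 l; lia.
Qed.

Definition fam_seq n (t : 5.-tuple 'I_(n - 3).+1) : seq nat :=
  let p := map val t in mkseq (fam (nth 0 p 0) (nth 0 p 1) (nth 0 p 2) (nth 0 p 3)) n.

(* The guard [2 < n] discards the tuples summing to the truncated value [n - 3 = 0]. *)
Definition fam_params n :=
  [set t : 5.-tuple 'I_(n - 3).+1 | (2 < n) && (\sum_(i <- t) i == n - 3)].

Lemma sum_ord_seq m (s : seq 'I_m) : \sum_(i <- s) i = sumn (map val s).
Proof. by rewrite sumnE big_map. Qed.

Lemma fam_params_vals n t : t \in fam_params n ->
  exists a b c j l, map val t = [:: a; b; c; j; l] /\ a + b + c + j + l + 3 = n.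
Proof.
rewrite inE sum_ord_seq => /andP[n_gt2 /eqP].
have : size (map val t) = 5 by rewrite size_map size_tuple.
case: (map val t) => [|a [|b [|c [|j [|l []]]]]] // _ /= sum_t.
by exists a, b, c, j, l; split; last lia.
Qed.

Lemma mem_fam_seqs n x : x \in image (@fam_seq n) (fam_params n) <-> fam_prefix n x.
Proof.
split=> [/imageP[t] | [a [b [c [j [len ->]]]]]].
  case/fam_params_vals=> a [b [c [j [l [vals_t sum_t]]]]] ->.
  by exists a, b, c, j; rewrite /fam_seq vals_t; split; first lia.
pose l := n - 3 - (a + b + c + j).
pose t : 5.-tuple 'I_(n - 3).+1 := [tuple inord a; inord b; inord c; inord j; inord l].
have vals_t : map val t = [:: a; b; c; j; l] by rewrite /= !inordK //; lia.
apply/imageP; exists t; last by rewrite /fam_seq vals_t.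
by rewrite inE sum_ord_seq vals_t /=; apply/andP; split; [lia | apply/eqP; lia].
Qed.

Definition avoiders n : seq (seq nat) :=
  image (@binary_seq n.-1) {: n.-1.-tuple bool} ++ image (@fam_seq n) (fam_params n).

Lemma mem_avoiders n x : 0 < n ->
  avoiding_ascent_seq [:: [:: 0; 1; 1; 2]; [:: 0; 1; 2; 0]] n x = (x \in avoiders n).
Proof.
move=> n_gt0; rewrite mem_cat mem_binary_seqs prednK //; apply/idP/orP.
  case/avoiding_ascent_seqE => size_x asc_x no0112 no0120.
  have x_nil : x != [::] by rewrite -size_eq0 size_x -lt0n.
  have [x_bin | x_fam] := avoider_shape x_nil asc_x no0112 no0120; last first.
    by right; apply/mem_fam_seqs; rewrite -size_x.
  by left; case/andP: asc_x => x_0 _; rewrite size_x eqxx x_0.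
case=> [/and3P[/eqP size_x /eqP x_0 x_bin] | /mem_fam_seqs[a [b [c [j [len ->]]]]]].
  have [no0112 no0120] := binary_avoid x_bin.
  by apply/avoiding_ascent_seqE; split=> //; apply: binary_ascent.
apply/avoiding_ascent_seqE; split; rewrite ?size_mkseq //.
- exact: fam_ascent.
- exact: fam_avoid0112.
- exact: fam_avoid0120.
Qed.

Lemma uniq_avoiders n : uniq (avoiders n).
Proof.
rewrite cat_uniq; apply/and3P; split.
- have bool_inj : injective nat_of_bool by do 2!case.
  by rewrite map_inj_uniq ?enum_uniq // => t1 t2 [/(inj_map bool_inj)/val_inj].
- apply/hasPn => _ /mem_fam_seqs[a [b [c [j [len ->]]]]].
  rewrite mem_binary_seqs; apply/negP => /and3P[_ _ /(nth_le1 (a + b + 2))].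
  by rewrite nth_mkseq /fam; [repeat case: ifP; lia | lia].
rewrite map_inj_in_uniq ?enum_uniq // => t1 t2; rewrite !mem_enum.
case/fam_params_vals=> a [b [c [j [l [vals1 sum1]]]]].
case/fam_params_vals=> a' [b' [c' [j' [l' [vals2 sum2]]]]].
rewrite /fam_seq vals1 vals2 /= => eq_fam.
have [len1 len2] : a + b + c + j + 3 <= n /\ a' + b' + c' + j' + 3 <= n by lia.
have [ea eb ec ej] := fam_inj len1 len2 eq_fam.
by apply/val_inj/(inj_map val_inj); rewrite vals1 vals2; congr [:: _; _; _; _; _]; lia.
Qed.

Lemma size_avoiders n : size (avoiders n) = 2 ^ n.-1 + 'C(n.+1, 4).
Proof.
rewrite size_cat !size_image card_tuple card_bool; congr (_ + _).
have [n_gt2 | n_le2] := ltnP 2 n; last first.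
  by rewrite bin_small ?ltnS //; apply: eq_card0 => t; rewrite inE ltnNge n_le2.
have -> : n.+1 = 4 + (n - 3) by lia.
by rewrite -card_ord_partitions; apply: eq_card => t; rewrite !inE n_gt2.
Qed.

Theorem theorem3p6 (n : nat) : 1 <= n ->
  a_P [:: [:: 0; 1; 1; 2]; [:: 0; 1; 2; 0]] n = 2 ^ n.-1 + 'C(n.+1, 4).
Proof.
move=> n_gt0; rewrite /a_P -size_avoiders; apply: card_tuples_seq.
- exact: uniq_avoiders.
- by move=> x; rewrite mem_avoiders.
by move=> x /and3P[/eqP <- /ascent_seq_lt].
Qed.
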